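(* Let $q=2^{4n+2}$ with $n\ge0$ an integer. Then there exists a linear code over $\mathbb{F}_q$ with parameters $[(\sqrt q-1)(q+1),5,d]_q$ where $d\ge (\sqrt q-1)(q+1)-(2q+2+20\sqrt q)=(\sqrt q-3)q-19\sqrt q-3$. Specifically, with $\xi\in\mathbb{F}_q$ a root of $T^2+T+1$, $\Omega^*=\bigcup_{z\in\mathbb{F}_{\sqrt q}^*}\{(x,y)\in AG(2,q): x^2+xy+\xi y^2=z\}$ and $\mathcal{V}=\langle X,Y,X^2,XY,Y^2\rangle_{\mathbb{F}_q}$, the functional code $\mathcal{C}_{\mathcal{V}}(\Omega^* )$ has these parameters. *)

From HB Require Import structures.
From mathcomp Require Import all_boot all_order all_algebra.
Set Implicit Arguments. Unset Strict Implicit. Unset Printing Implicit Defensive.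
Import Order.TTheory GRing.Theory Num.Theory.
Local Open Scope ring_scope.

(* sqrt q where q = 2^(4n+2) *)
Definition sqq (n : nat) : nat := (2 ^ (2 * n + 1))%N.

Definition in_subfield_star (F : finFieldType) (s : nat) (z : F) : bool :=
  (z != 0) && (z ^+ s == z).

Definition Omega (F : finFieldType) (s : nat) (xi : F) : {set F * F} :=
  [set p : F * F | in_subfield_star s (p.1 ^+ 2 + p.1 * p.2 + xi * p.2 ^+ 2)].

Definition monomial (F : finFieldType) (i : 'I_5) (p : F * F) : F :=
  match val i with
  | 0%N => p.1 | 1%N => p.2 | 2%N => p.1 ^+ 2 | 3%N => p.1 * p.2 | _ => p.2 ^+ 2
  end.

(* generator matrix of the functional code C_V(Omega): row i is the evaluation
   vector of the i-th basis monomial at the points of Omega (enumerated) *)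
Definition fgenmx (F : finFieldType) (S : {set F * F}) : 'M[F]_(5, #|S|) :=
  \matrix_(i < 5, j < #|S|) monomial i (enum_val j).

Definition wt (F : finFieldType) (N : nat) (w : 'rV[F]_N) : nat :=
  #|[set j : 'I_N | w 0 j != 0]|.

From HB Require Import structures.
From mathcomp Require Import all_boot all_order all_algebra all_field.
From mathcomp Require Import ring zify.
Set Implicit Arguments. Unset Strict Implicit. Unset Printing Implicit Defensive.
Import Order.TTheory GRing.Theory Num.Theory.
Local Open Scope ring_scope.

(* Write Q(x, y) = x^2 + xy + xi y^2.  Because q = 4 * 16^n, the equation
   t^2 + t = xi has no root in F_q, so Q is anisotropic: Q vanishes only at the
   origin, every nonzero level set of Q has q + 1 points (scaling by a square
   root moves one onto another), and Omega* is the union of the s - 1 level sets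
   over F_s^*, the fixed field of x |-> x^s minus 0.  A nonzero element of V has
   at most 2q zeros in AG(2, q), which bounds the weight of every nonzero
   codeword below by |Omega*| - 2q and, as soon as |Omega*| > 2q, makes
   evaluation on Omega* injective; for q = 4 injectivity is checked directly on
   the five points of Omega*. *)

Definition Vfun (R : comNzRingType) (a b c d e : R) (p : R * R) : R :=
  a * p.1 + b * p.2 + c * p.1 ^+ 2 + d * (p.1 * p.2) + e * p.2 ^+ 2.

Lemma Vfun_swap (R : comNzRingType) (a b c d e : R) (p : R * R) :
  Vfun a b c d e (p.2, p.1) = Vfun b a e d c p.
Proof. by rewrite /Vfun /=; ring. Qed.

Lemma card_set_pair (T1 T2 : finType) (P : T1 -> T2 -> bool) :
  #|[set p : T1 * T2 | P p.1 p.2]| = (\sum_x #|[set y | P x y]|)%N.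
Proof.
rewrite -sum1dep_card -(pair_big_dep xpredT P (fun _ _ => 1%N)) /=.
by apply: eq_bigr => x _; rewrite sum1dep_card.
Qed.

Section FiniteField.
Variable F : finFieldType.

Lemma card_roots_lt_size (p : {poly F}) : p != 0 ->
  (#|[set x | root p x]| < size p)%N.
Proof.
move=> p_neq0; rewrite cardE.
apply: max_poly_roots p_neq0 _ (enum_uniq _).
by apply/allP => x; rewrite mem_enum inE.
Qed.

Lemma card_roots_deg2 (u v w : F) : w != 0 ->
  (#|[set y : F | (w * y ^+ 2 + v * y + u == 0)%R]| <= 2)%N.
Proof.
move=> w_neq0; have p_neq0 : Poly [:: u; v; w] != 0.
  by apply: contraNneq w_neq0 => p0; rewrite -[w]/([:: u; v; w]`_2) -coef_Poly p0 coef0.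
have := leq_trans (card_roots_lt_size p_neq0) (size_Poly _).
rewrite ltnS; apply: leq_trans; apply/eq_leq/eq_card => y; rewrite !inE /root horner_Poly /=.
by congr (_ == _); ring.
Qed.

Lemma card_roots_deg1 (u v : F) : v != 0 ->
  (#|[set y : F | (v * y + u == 0)%R]| <= 1)%N.
Proof.
move=> v_neq0; have p_neq0 : Poly [:: u; v] != 0.
  by apply: contraNneq v_neq0 => p0; rewrite -[v]/([:: u; v]`_1) -coef_Poly p0 coef0.
have := leq_trans (card_roots_lt_size p_neq0) (size_Poly _).
rewrite ltnS; apply: leq_trans; apply/eq_leq/eq_card => y; rewrite !inE /root horner_Poly /=.
by congr (_ == _); ring.
Qed.

Definition Vzeros (a b c d e : F) := [set p : F * F | Vfun a b c d e p == 0].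

Lemma card_Vzeros_swap (a b c d e : F) : #|Vzeros a b c d e| = #|Vzeros b a e d c|.
Proof.
have swapK : involutive (fun p : F * F => (p.2, p.1)) by case.
rewrite -(card_imset _ (inv_inj swapK)); apply: eq_card => p.
rewrite -[p in LHS]swapK (mem_imset _ _ (inv_inj swapK)) !inE.
by rewrite Vfun_swap.
Qed.

Lemma card_Vzeros_fibres (a b c d e : F) : #|Vzeros a b c d e| =
  (\sum_x #|[set y | (e * y ^+ 2 + (b + d * x) * y + (a * x + c * x ^+ 2) == 0)%R]|)%N.
Proof.
rewrite -card_set_pair; apply: eq_card => -[x y]; rewrite !inE /Vfun /=.
by congr (_ == _); ring.
Qed.

Lemma sum_card_le (G : F -> nat) k : (forall x, G x <= k)%N ->
  (\sum_x G x <= k * #|F|)%N.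
Proof.
move=> G_le; apply: (@leq_trans (\sum_(x : F) k)); first exact: leq_sum.
by rewrite sum_nat_const mulnC.
Qed.

Lemma card_Vzeros_deg2 (a b c d e : F) : e != 0 ->
  (#|Vzeros a b c d e| <= 2 * #|F|)%N.
Proof.
by move=> e_neq0; rewrite card_Vzeros_fibres; apply: sum_card_le => x; apply: card_roots_deg2.
Qed.

Lemma card_Vzeros_bilinear (a b c d : F) : d != 0 ->
  (#|Vzeros a b c d 0%R| <= 2 * #|F|)%N.
Proof.
move=> d_neq0; rewrite card_Vzeros_fibres (bigD1 (- b / d)) //= mul2n -addnn.
rewrite leq_add ?max_card //; apply: leq_trans (_ : \sum_(x | x != - b / d) 1 <= _)%N.
  apply: leq_sum => x x_neq.
  have coef_neq0 : b + d * x != 0.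
    apply: contraNneq x_neq => /eqP; rewrite addr_eq0 => /eqP ->.
    by rewrite opprK mulrC mulKf.
  apply: leq_trans (card_roots_deg1 _ coef_neq0).
  by apply/eq_leq/eq_card => y; rewrite !inE mul0r add0r.
by rewrite sum1dep_card max_card.
Qed.

Lemma card_Vzeros_linear (a b c : F) : b != 0 ->
  (#|Vzeros a b c 0%R 0%R| <= 2 * #|F|)%N.
Proof.
move=> b_neq0; rewrite card_Vzeros_fibres; apply: leq_trans (sum_card_le (k := 1) _) _.
  move=> x; apply: leq_trans (card_roots_deg1 _ b_neq0).
  by apply/eq_leq/eq_card => y; rewrite !inE !mul0r !addr0 add0r.
by rewrite leq_pmul2r //; apply/card_gt0P; exists 0.
Qed.

Lemma card_Vzeros_le (a b c d e : F) :
  ~~ [&& a == 0, b == 0, c == 0, d == 0 & e == 0] ->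
  (#|Vzeros a b c d e| <= 2 * #|F|)%N.
Proof.
move=> nz; have [e0|] := eqVneq e 0; last exact: card_Vzeros_deg2.
have [c0|] := eqVneq c 0; last by rewrite card_Vzeros_swap => /card_Vzeros_deg2.
have [d0|] := eqVneq d 0; subst e; last exact: card_Vzeros_bilinear.
have [b0|] := eqVneq b 0; subst d; last exact: card_Vzeros_linear.
subst b c; have a_neq0 : a != 0 by move: nz; rewrite !eqxx !andbT.
by rewrite card_Vzeros_swap; apply: card_Vzeros_linear.
Qed.
End FiniteField.

Lemma expr_pow_fixed (R : pzSemiRingType) (u : R) m : u ^+ m = u ->
  forall k, u ^+ (m ^ k) = u.
Proof. by move=> um; elim=> [|k IHk]; rewrite ?expr1 // expnS exprM um IHk. Qed.

Section Char2.
Variable F : finFieldType.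
Hypothesis F2 : 2 \in [pchar F].

Lemma exprD_pow2 k (a b : F) : (a + b) ^+ (2 ^ k) = a ^+ (2 ^ k) + b ^+ (2 ^ k).
Proof. by apply: exprDn_pchar; rewrite pnatX pnatE ?F2. Qed.

Lemma sqrD_pchar2 (a b : F) : (a + b) ^+ 2 = a ^+ 2 + b ^+ 2.
Proof. exact: (exprD_pow2 1). Qed.

Lemma sqr_inj : injective (fun x : F => x ^+ 2).
Proof.
move=> x y /= eq_sqr; have : (x - y) ^+ 2 = 0.
  by rewrite sqrD_pchar2 sqrrN eq_sqr -sqrD_pchar2 (addrr_pchar2 F2) expr0n.
by move/eqP; rewrite expf_eq0 subr_eq0 => /eqP.
Qed.

Lemma sqr_surj (z : F) : exists l, l ^+ 2 = z.
Proof. by have [g _ gK] := injF_bij sqr_inj; exists (g z); rewrite [LHS]gK. Qed.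

Lemma card_fixed_expr_pow2 k : (0 < k)%N -> #|F| = (2 ^ k * 2 ^ k)%N ->
  #|[set z : F | z ^+ (2 ^ k) == z]| = (2 ^ k)%N.
Proof.
move=> k_gt0 cardF; set s := (2 ^ k)%N; set K := [set z | _].
have s_gt1 : (1 < s)%N by rewrite -[1%N](expn0 2) ltn_exp2l.
have K_le : (#|K| <= s)%N.
  have p_neq0 : 'X^s - 'X != 0 :> {poly F}.
    by rewrite -size_poly_eq0 size_polyDl ?size_polyXn // size_polyN size_polyX.
  have := card_roots_lt_size p_neq0.
  rewrite size_polyDl ?size_polyXn ?size_polyN ?size_polyX // ltnS.
  by apply/leq_trans/eq_leq/eq_card => z; rewrite !inE /root !hornerE subr_eq0.
(* T z = z + z^s is additive with kernel K and image in K, so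
   x |-> (x + Tinv (T x), T x) embeds F into K * K. *)
pose T (z : F) := z + z ^+ s.
have TD a b : T (a + b) = T a + T b by rewrite /T exprD_pow2; ring.
have T_in_K x : T x \in K.
  by rewrite inE /T exprD_pow2 -exprM -cardF expf_card addrC.
have T_eq0 x : (T x == 0) = (x \in K).
  by rewrite inE addr_eq0 (oppr_pchar2 F2) eq_sym.
pose Tinv y := odflt 0 [pick u | T u == y].
have TinvK x : T (Tinv (T x)) = T x.
  by rewrite /Tinv; case: pickP => [u /eqP //|/(_ x)]; rewrite eqxx.
pose decomp x := (x + Tinv (T x), T x).
have decomp_inj : injective decomp by move=> x x' [] + eqT; rewrite eqT => /addIr.
have decomp_in_KK x : decomp x \in setX K K.
  by rewrite inE /= T_in_K andbT -T_eq0 TD TinvK (addrr_pchar2 F2).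
have : (#|F| <= #|K| * #|K|)%N.
  rewrite -cardsX -cardsT -(card_imset _ decomp_inj); apply: subset_leq_card.
  by apply/subsetP => _ /imsetP [x _ ->].
by rewrite cardF; nia.
Qed.

Variable n : nat.
Hypothesis cardF : #|F| = (2 ^ (4 * n + 2))%N.
Variable xi : F.
Hypothesis xi_root : xi ^+ 2 + xi + 1 = 0.

Lemma xi_sqr : xi ^+ 2 = xi + 1.
Proof. by apply/eqP; rewrite -subr_eq0 (oppr_pchar2 F2) addrA xi_root. Qed.

Lemma sqr_add_neq_xi t : t ^+ 2 + t != xi.
Proof.
(* A root t satisfies t^4 = t + 1, hence t^16 = t, and then t = t^q = t + 1. *)
apply/negP => /eqP t_root.
have t2 : t ^+ 2 = t + xi by rewrite -t_root addrCA (addrr_pchar2 F2) addr0.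
have t4 : t ^+ 4 = t + 1.
  by rewrite (exprM t 2 2) t2 sqrD_pchar2 xi_sqr t2 addrA -(addrA t) (addrr_pchar2 F2) addr0.
have t16 : t ^+ 16 = t.
  by rewrite (exprM t 4 4) t4 (exprD_pow2 2) t4 expr1n -addrA (addrr_pchar2 F2) addr0.
have t1_16 : (t + 1) ^+ 16 = t + 1 by rewrite (exprD_pow2 4) t16 expr1n.
have := expf_card t; rewrite cardF expnD expnM mulnC exprM t4 (expr_pow_fixed t1_16).
by move/eqP; rewrite -subr_eq0 addrC addKr oner_eq0.
Qed.

Definition qform (p : F * F) := p.1 ^+ 2 + p.1 * p.2 + xi * p.2 ^+ 2.

Lemma qform_eq0 p : (qform p == 0) = (p == (0, 0)).
Proof.
case: p => x y; apply/idP/eqP => [/eqP|[-> ->]]; last first.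
  by rewrite /qform /= !expr0n !mul0r !mulr0 !addr0.
have [-> /eqP|y_neq0 Q0] := eqVneq y 0.
  by rewrite /qform /= expr0n !mulr0 !addr0 expf_eq0 /= => /eqP ->.
have key : (x / y) ^+ 2 + x / y + xi = qform (x, y) / y ^+ 2.
  by rewrite /qform /=; field.
move: (sqr_add_neq_xi (x / y)).
by rewrite -[xi in _ != xi](oppr_pchar2 F2) -addr_eq0 key Q0 mul0r eqxx.
Qed.

Lemma qform_scale l p : qform (l * p.1, l * p.2) = l ^+ 2 * qform p.
Proof. by rewrite /qform /=; ring. Qed.

Definition level z := [set p | qform p == z].

Lemma card_level0 : #|level 0| = 1%N.
Proof.
by rewrite -(cards1 ((0 : F), (0 : F))); apply: eq_card => p; rewrite !inE qform_eq0.
Qed.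

Lemma card_level_unit z : z != 0 -> #|level z| = #|level 1|.
Proof.
move=> z_neq0; have [l l2] := sqr_surj z.
have l_neq0 : l != 0 by apply: contraNneq z_neq0 => l0; rewrite -l2 l0 expr0n.
pose scale (k : F) (p : F * F) := (k * p.1, k * p.2).
have scaleK k : k != 0 -> cancel (scale k) (scale k^-1).
  by move=> k_neq0 [x y]; rewrite /scale /= !mulKf.
rewrite -(card_imset (level 1) (can_inj (scaleK _ l_neq0))).
rewrite (can2_imset_pre _ (scaleK _ l_neq0)); last first.
  by rewrite -[X in cancel _ (scale X)]invrK; apply/scaleK/invr_neq0.
apply: eq_card => p; rewrite !inE qform_scale exprVn l2.
by rewrite -(inj_eq (mulfI (invr_neq0 z_neq0))) mulVf.
Qed.

Lemma card_level1 : #|level 1| = (#|F| + 1)%N.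
Proof.
have sum_levels : (\sum_z #|level z| = #|F| * #|F|)%N.
  rewrite -card_prod -sum1_card (partition_big qform xpredT) //=.
  by apply: eq_bigr => z _; rewrite sum1dep_card.
move: sum_levels; rewrite (bigD1 0) //= card_level0.
rewrite (eq_bigr (fun=> #|level 1|)) => [|z]; last exact: card_level_unit.
rewrite sum_nat_const cardC1.
have : (1 < #|F|)%N by rewrite cardF -[1%N](expn0 2) ltn_exp2l // addn2.
move: #|F| #|level 1| => N M N_gt1 sumNM; apply/eqP.
rewrite -(eqn_pmul2l (_ : 0 < N.-1)%N); last by rewrite -ltnS prednK // ltnW.
by apply/eqP; nia.
Qed.

Lemma card_F_sqq : #|F| = (sqq n * sqq n)%N.
Proof. by rewrite cardF /sqq -expnD; congr (2 ^ _)%N; lia. Qed.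

Lemma card_subfield_star : #|[set z : F | in_subfield_star (sqq n) z]| = (sqq n - 1)%N.
Proof.
have k_gt0 : (0 < 2 * n + 1)%N by rewrite addn1.
have -> : [set z : F | in_subfield_star (sqq n) z] = [set z | z ^+ sqq n == z] :\ 0.
  by apply/setP => z; rewrite !inE /in_subfield_star.
have := cardsD1 0 [set z : F | z ^+ sqq n == z].
rewrite (card_fixed_expr_pow2 k_gt0 card_F_sqq) inE expr0n expn_eq0 /= eqxx -/(sqq n).
by move=> card_K; rewrite [in RHS]card_K add1n subn1.
Qed.

Lemma card_Omega : #|Omega (sqq n) xi| = ((sqq n - 1) * (#|F| + 1))%N.
Proof.
rewrite -sum1_card (partition_big qform (in_subfield_star (sqq n))) => [|p]; last by rewrite inE.
rewrite (eq_bigr (fun=> #|level 1|)) => [|z z_star]; last first.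
  rewrite sum1dep_card -(card_level_unit (proj1 (andP z_star))).
  by apply: eq_card => p; rewrite !inE -/(qform p); case: eqP => [->|]; rewrite ?z_star ?andbF.
by rewrite (sum_nat_cond_const (in_subfield_star (sqq n))) card_subfield_star card_level1.
Qed.
End Char2.

Lemma xi_cube (R : comNzRingType) (xi : R) : xi ^+ 2 + xi + 1 = 0 -> xi ^+ 3 = 1.
Proof.
move=> xi_root; apply/eqP; rewrite -subr_eq0.
have -> : xi ^+ 3 - 1 = (xi - 1) * (xi ^+ 2 + xi + 1) by ring.
by rewrite xi_root mulr0.
Qed.

(* Over F_4 these are the five points of the conic Q = 1; the representatives
   are chosen so that the interpolation identities below hold in any ring with
   xi^2 = xi + 1, without using 2 = 0. *)
Definition five_points (R : comNzRingType) (xi : R) : seq (R * R) :=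
  [:: (1, 0); (0, xi); (xi, xi - 1); (- xi, xi); (-1, xi - 1)].

Lemma qform_five_points (F : finFieldType) (xi : F) : 2 \in [pchar F] ->
  xi ^+ 2 + xi + 1 = 0 -> {in five_points xi, forall p, qform xi p = 1}.
Proof.
move=> F2 xi_root p; rewrite !inE /qform.
case/orP=> [/eqP->|/orP[/eqP->|/orP[/eqP->|/orP[/eqP->|/eqP->]]]] /=.
- by ring.
- by apply: etrans (xi_cube xi_root); ring.
- by apply: etrans (xi_cube xi_root); ring.
- by apply: etrans (xi_cube xi_root); ring.
- by have xi2 := xi_sqr F2 xi_root; ring: xi2.
Qed.

Lemma Vfun_eq0_on_five_points (R : comNzRingType) (xi a b c d e : R) :
  xi ^+ 2 = xi + 1 -> {in five_points xi, forall p, Vfun a b c d e p = 0} ->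
  [&& a == 0, b == 0, c == 0, d == 0 & e == 0].
Proof.
(* The evaluation matrix at the five points has determinant xi^3 = 1 + 2 xi, a
   unit of Z[xi], so each coefficient is a Z[xi]-combination of the values. *)
move=> xi2 vanish; set f := Vfun a b c d e.
have [v1 v2 v3 v4 v5] : [/\ f (1, 0) = 0, f (0, xi) = 0, f (xi, xi - 1) = 0,
    f (- xi, xi) = 0 & f (-1, xi - 1) = 0].
  by split; apply: vanish; rewrite !inE eqxx ?orbT.
have -> : a = 2 * f (1, 0) + (2 - xi) * f (0, xi) + (1 - xi) * f (xi, xi - 1)
    + (xi - 2) * f (- xi, xi) + (xi - 1) * f (-1, xi - 1).
  by rewrite /f /Vfun /=; ring: xi2.
have -> : b = (1 + 2 * xi) * f (1, 0) + (2 * xi - 2) * f (0, xi) - xi * f (xi, xi - 1)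
    - xi * f (- xi, xi) + (1 + 2 * xi) * f (-1, xi - 1).
  by rewrite /f /Vfun /=; ring: xi2.
have -> : c = - f (1, 0) + (xi - 2) * f (0, xi) + (xi - 1) * f (xi, xi - 1)
    + (2 - xi) * f (- xi, xi) + (1 - xi) * f (-1, xi - 1).
  by rewrite /f /Vfun /=; ring: xi2.
have -> : d = (1 - 2 * xi) * f (1, 0) + (3 - 2 * xi) * f (0, xi) + f (xi, xi - 1)
    + (2 * xi - 3) * f (- xi, xi) - f (-1, xi - 1).
  by rewrite /f /Vfun /=; ring: xi2.
have -> : e = - (1 + xi) * f (1, 0) + (xi - 2) * f (0, xi) + f (xi, xi - 1)
    + f (- xi, xi) - (1 + xi) * f (-1, xi - 1).
  by rewrite /f /Vfun /=; ring: xi2.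
by rewrite v1 v2 v3 v4 v5 !mulr0 !(addr0, subr0, oppr0) eqxx.
Qed.

Lemma sqq_ge8 n : (0 < n)%N -> (8 <= sqq n)%N.
Proof. by move=> n_gt0; rewrite /sqq (_ : 8 = 2 ^ 3)%N // leq_exp2l //; lia. Qed.

Lemma row_free_mulmx_eq0 (F : fieldType) m n (A : 'M[F]_(m, n)) :
  (forall v : 'rV_m, v *m A = 0 -> v = 0) -> row_free A.
Proof.
move=> mulA_inj; rewrite -kermx_eq0; apply/eqP/row_matrixP => i.
by rewrite row0; apply/mulA_inj/sub_kermxP/row_sub.
Qed.

Section FunctionalCode.
Variable F : finFieldType.

Lemma mulmx_fgenmx (c : 'rV[F]_5) (S : {set F * F}) j : (c *m fgenmx S) 0 j =
  Vfun (c 0 (inord 0)) (c 0 (inord 1)) (c 0 (inord 2)) (c 0 (inord 3)) (c 0 (inord 4))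
    (enum_val j).
Proof.
rewrite !mxE !big_ord_recl big_ord0 !mxE /Vfun /monomial /= addr0 !addrA.
by congr (_ + _ + _ + _ + _); congr (c 0 _ * _); apply: val_inj; rewrite /= inordK.
Qed.

Lemma row5_eq0 (c : 'rV[F]_5) : (c == 0) =
  [&& c 0 (inord 0) == 0, c 0 (inord 1) == 0, c 0 (inord 2) == 0,
      c 0 (inord 3) == 0 & c 0 (inord 4) == 0].
Proof.
apply/eqP/and5P => [->|[]]; first by rewrite !mxE.
move=> /eqP c0 /eqP c1 /eqP c2 /eqP c3 /eqP c4; apply/rowP => i; rewrite mxE.
by rewrite -[i]inord_val; case: i => [[|[|[|[|[|k]]]]] ?].
Qed.

Lemma card_le_wt_fgenmx (S : {set F * F}) (c : 'rV[F]_5) : c != 0 ->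
  (#|S| <= wt (c *m fgenmx S) + 2 * #|F|)%N.
Proof.
rewrite row5_eq0 => c_neq0; set w := c *m fgenmx S.
have card_zeros : (#|[set j | (w 0 j == 0)%R]| <= 2 * #|F|)%N.
  apply: leq_trans (card_Vzeros_le c_neq0).
  rewrite -(card_imset _ enum_val_inj); apply/subset_leq_card/subsetP.
  by move=> _ /imsetP[j + ->]; rewrite !inE mulmx_fgenmx.
rewrite -{1}[#|S|]card_ord -(cardsC [set j | w 0 j == 0]) addnC leq_add //.
by apply/eq_leq/eq_card => j; rewrite !inE.
Qed.

Lemma rank_fgenmx_large (S : {set F * F}) : (2 * #|F| < #|S|)%N ->
  \rank (fgenmx S) = 5%N.
Proof.
move=> S_large; apply/eqP/row_free_mulmx_eq0 => c c0; apply/eqP; apply: contraLR S_large.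
have wt0 : wt (0 : 'rV[F]_#|S|) = 0%N.
  by apply/eqP; rewrite cards_eq0; apply/eqP/setP => j; rewrite !inE mxE eqxx.
by move/(card_le_wt_fgenmx S); rewrite c0 wt0 add0n -leqNgt.
Qed.

Lemma rank_fgenmx_five_points (xi : F) (S : {set F * F}) : xi ^+ 2 = xi + 1 ->
  {subset five_points xi <= S} -> \rank (fgenmx S) = 5%N.
Proof.
move=> xi2 sub; apply/eqP/row_free_mulmx_eq0 => c c0; apply/eqP; rewrite row5_eq0.
apply: (Vfun_eq0_on_five_points xi2) => p /sub p_in_S.
by rewrite -(enum_rankK_in p_in_S p_in_S) -mulmx_fgenmx c0 mxE.
Qed.
End FunctionalCode.

Theorem corollary2 (n : nat) (F : finFieldType) (hF : #|F| = (2 ^ (4 * n + 2))%N)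
  (xi : F) (hxi : xi ^+ 2 + xi + 1 = 0) :
  let q := (2 ^ (4 * n + 2))%N in
  let s := sqq n in
  let Om := Omega s xi in
  #|Om| = ((s - 1) * (q + 1))%N /\
  \rank (fgenmx Om) = 5%N /\
  (forall w : 'rV[F]_#|Om|, (w <= fgenmx Om)%MS -> w != 0 ->
     ((s%:Z - 1) * (q%:Z + 1) - (2 * q%:Z + 2 + 20 * s%:Z) <= (wt w)%:Z)%R).
Proof.
move=> q s Om.
have F2 : 2 \in [pchar F] by apply: (card_finPcharP hF).
have cardOm : #|Om| = ((s - 1) * (q + 1))%N by rewrite card_Omega // hF.
have s_gt0 : (0 < s)%N by rewrite expn_gt0.
split=> //; split.
  (* For q = 4, |Omega*| = 5 is below the counting bound 2q. *)
  have [n0|n_gt0] := posnP n.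
    apply: (rank_fgenmx_five_points (xi_sqr F2 hxi)) => p /(qform_five_points F2 hxi) Qp.
    by rewrite inE -/(qform xi p) Qp /s n0 /in_subfield_star oner_eq0 expr1n eqxx.
  apply: (rank_fgenmx_large (S := Om)); rewrite cardOm hF -/q.
  have := sqq_ge8 n_gt0; have : (0 < q)%N by rewrite expn_gt0.
  rewrite -/s; nia.
move=> w /submxP[c ->] w_neq0.
have c_neq0 : c != 0 by apply: contraNneq w_neq0 => ->; rewrite mul0mx.
have := card_le_wt_fgenmx Om c_neq0; rewrite {1}cardOm hF -/q.
have -> : (s%:Z - 1) * (q%:Z + 1) = ((s - 1) * (q + 1))%N :> int.
  by rewrite PoszM subzn.
move: (wt _) => W; lia.
Qed.
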